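(* Let $y\in\tilde W$ and $s\in\tilde{\mathbb S}$, and assume $s=s_H$ is the reflection in the affine root hyperplane $H=H_{\alpha,k}$ with $\alpha\in\Sigma$, $k\in\mathbb Z$. Let $\beta\in\Sigma$. (1) If $\beta\notin\{\pm\alpha,\pm\bar y\delta(\alpha)\}$, then $sy\delta(s)\mathbf a\geqslant_{\bar s(\beta)}\mathbf a$ if and only if $y\mathbf a\geqslant_\beta\mathbf a$. (2) If $\beta\neq\pm\bar y\delta(\alpha)$, then $y\mathbf a\geqslant_\beta\mathbf a$ if and only if $y\delta(s)\mathbf a\geqslant_\beta\mathbf a$.
   Context: Let $\tilde W=X_*(T)_\Gamma\rtimes W$ be the Iwahori–Weyl group of a quasi-split connected semisimple group $G$ over a local field $F$ (finite extension of $\mathbb Q_p$ or $\mathbb F_q((\epsilon))$) split over a tamely ramified extension, relative to a maximal $L$-split torus $S$ defined over $F$ with centralizer $T$, where $L$ is the completion of the maximal unramified extension of $F$ and $\Gamma=\mathrm{Gal}(\bar L/L)$. Let $\delta$ be the automorphism of $\tilde W$ induced by the Frobenius $\sigma$ of $L/F$; it also acts on $W$ and on the root system $\Sigma$ below. $V=X_*(T)_\Gamma\otimes\mathbb R$; $\Sigma$ is the reduced root system such that affine roots are $v\mapsto\langle a,v\rangle+k$, $a\in\Sigma,k\in\mathbb Z$; $H_{a,k}=\{v\in V:\langle a,v\rangle=k\}$; $W=W(\Sigma)$. $\mathbf a$ is a fixed $\sigma$-stable base alcove; $\tilde W$ acts on alcoves; $\tilde{\mathbb S}$ is the set of simple affine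 reflections (reflections in walls of $\mathbf a$). For $x\in\tilde W$, $\bar x$ denotes its image under the projection $\tilde W\to W$. For $a\in\Sigma$ and an alcove $\mathbf b$, $k(a,\mathbf b)$ is the unique integer $k$ such that $\mathbf b$ lies between $H_{a,k}$ and $H_{a,k-1}$; for alcoves $\mathbf b_1,\mathbf b_2$, $\mathbf b_1\geqslant_a\mathbf b_2$ means $k(a,\mathbf b_1)\ge k(a,\mathbf b_2)$. *)

From HB Require Import structures.
From mathcomp Require Import all_boot all_order all_algebra.
From mathcomp Require Import all_classical all_reals all_analysis.
Set Implicit Arguments. Unset Strict Implicit. Unset Printing Implicit Defensive.
Import Order.TTheory GRing.Theory Num.Theory.
Import numFieldTopology.Exports numFieldNormedType.Exports.
Local Open Scope ring_scope.
Local Open Scope classical_set_scope.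

(* V = 'cV[R]_n (column vectors); V^* = 'rV[R]_n (row vectors);
   pairing <a, v> = a *m v.  Linear maps of V are matrices acting on the left. *)
Section IW.
Variables (R : realType) (n : nat).
Local Notation V := 'cV[R]_n.
Local Notation Vd := 'rV[R]_n.

Definition pair (a : Vd) (v : V) : R := (a *m v) 0 0.

Definition is_int (x : R) : Prop := exists z : int, x = z%:~R.

(* Sigma is a reduced root system in V^* (spanning, since G is semisimple),
   cor a is the coroot a^vee in V of a. *)
Definition reduced_root_system (Sigma : seq Vd) (cor : Vd -> V) : Prop :=
  [/\ 0 \notin Sigma,
      row_full (\matrix_(i < size Sigma) Sigma`_i),
      (forall a, a \in Sigma -> pair a (cor a) = 2) &
      [/\ 
(forall a b, a \in Sigma -> b \in Sigma -> b - pair b (cor a) *: a \in Sigma),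
      (forall a b, a \in Sigma -> b \in Sigma -> is_int (pair b (cor a))) &
      (forall a b (c : R), a \in Sigma -> b \in Sigma -> b = c *: a -> c = 1 \/ c = -1)]].

Definition refl (cor : Vd -> V) (a : Vd) : 'M[R]_n := 1%:M - cor a *m a.

Inductive inW (Sigma : seq Vd) (cor : Vd -> V) : 'M[R]_n -> Prop :=
| inW1 : inW Sigma cor 1%:M
| inWs a w : a \in Sigma -> inW Sigma cor w -> inW Sigma cor (refl cor a *m w).

(* action of a linear map w of V on V^*: (w.a)(v) = a(w^-1 v) *)
Definition actR (w : 'M[R]_n) (a : Vd) : Vd := a *m invmx w.

(* elements of the Iwahori-Weyl group, through their action on V:
   x = (xbar, t) acts by v |-> xbar v + t  (t^lambda w  with lambda = t). *)
Definition aff := ('M[R]_n * V)%type.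
Definition act (x : aff) (v : V) : V := x.1 *m v + x.2.
Definition amul (x y : aff) : aff := (x.1 *m y.1, x.1 *m y.2 + x.2).
Definition bar (x : aff) : 'M[R]_n := x.1.

(* Lam = image of X_*(T)_Gamma in V *)
Definition in_IW (Sigma : seq Vd) (cor : Vd -> V) (Lam : set V) (x : aff) : Prop :=
  inW Sigma cor x.1 /\ Lam x.2.

(* delta: induced by the (linear) Frobenius action sigma on V *)
Definition delta (sigma : 'M[R]_n) (x : aff) : aff :=
  (sigma *m x.1 *m invmx sigma, sigma *m x.2).

(* affine reflection s_H in H = H_{a,k}: v |-> v - (<a,v> - k) a^vee *)
Definition sref (cor : Vd -> V) (a : Vd) (k : int) : aff :=
  (refl cor a, k%:~R *: cor a).

Definition Hyp (a : Vd) (k : int) : set V := [set v | pair a v = k%:~R].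

Definition Vreg (Sigma : seq Vd) : set V :=
  [set v | forall a (k : int), a \in Sigma -> pair a v <> k%:~R].

Definition is_alcove (Sigma : seq Vd) (b : set V) : Prop :=
  exists v, Vreg Sigma v /\ b = connected_component (Vreg Sigma) v.

Definition is_wall (Sigma : seq Vd) (b : set V) (a : Vd) (k : int) : Prop :=
  exists p, closure b p /\ pair a p = k%:~R /\
    (forall c (m : int), c \in Sigma -> pair c p = m%:~R -> Hyp c m = Hyp a k).

Definition simple_refl (Sigma : seq Vd) (cor : Vd -> V) (base : set V) (s : aff) : Prop :=
  exists a k, a \in Sigma /\ is_wall Sigma base a k /\ s = sref cor a k.

Definition img (x : aff) (b : set V) : set V := act x @` b.

Definition between (a : Vd) (b : set V) (k : int) : Prop :=
  forall v, b v -> k%:~R - 1 < pair a v < k%:~R.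

Definition geq_at (a : Vd) (b1 b2 : set V) : Prop :=
  exists k1 k2 : int, [/\ between a b1 k1, between a b2 k2 & (k2 <= k1)%R].

Definition IW_setting (Sigma : seq Vd) (cor : Vd -> V) (Lam : set V)
  (sigma : 'M[R]_n) (base : set V) : Prop :=
  [/\ reduced_root_system Sigma cor,
      [/\ Lam 0, (forall u v, Lam u -> Lam v -> Lam (u - v)),
          (forall a, a \in Sigma -> Lam (cor a)),
          (forall a u, a \in Sigma -> Lam u -> is_int (pair a u)) &
          (forall w u, inW Sigma cor w -> Lam u -> Lam (w *m u))],
      [/\ sigma \in unitmx, (exists m, (0 < m)%N /\ sigma ^+ m = 1),
          (forall u, Lam u <-> Lam (sigma *m u)),
          (forall w, inW Sigma cor w -> inW Sigma cor (sigma *m w *m invmx sigma)) &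
          (forall a, a \in Sigma -> actR sigma a \in Sigma)],
      is_alcove Sigma base &
      img (sigma, 0) base = base].

End IW.

(* The level k(g, x a) of an affine image of the base alcove a satisfies
   k(g, x a) = k(g xbar, a) + <g, x(0)>.  The simple reflection s = s_H fixes a
   point p of the closure of a lying on no hyperplane other than H, and the
   level of g is the ceiling of <g, p> whenever <g, p> is not an integer; hence
   s preserves the levels of all roots other than +-alpha.  Since delta(s) is
   the conjugate of s by the Frobenius, which fixes a, it preserves the levels
   of all roots other than +-alpha sigma^-1, and pushing this through y gives
   (2).  Part (1) follows from (2): s shifts the level of beta s_alpha on both
   alcoves by the same amount -<beta, alpha^vee> k. *)

From HB Require Import structures.
From mathcomp Require Import all_boot all_order all_algebra.
From mathcomp Require Import all_classical all_reals all_analysis.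
Import Order.TTheory GRing.Theory Num.Theory.
Import numFieldTopology.Exports numFieldNormedType.Exports.
Local Open Scope ring_scope.
Local Open Scope classical_set_scope.
From mathcomp Require Import ring lra zify.

Set Implicit Arguments.
Unset Strict Implicit.
Unset Printing Implicit Defensive.

Section LinearAlgebra.
Variables (R : realType) (n : nat).
Local Notation V := 'cV[R]_n.
Local Notation Vd := 'rV[R]_n.
Local Notation pair := (@pair R n).

Lemma pairM (a : Vd) (M : 'M[R]_n) (v : V) : pair a (M *m v) = pair (a *m M) v.
Proof. by rewrite /pair mulmxA. Qed.

Lemma pairD (a : Vd) (u v : V) : pair a (u + v) = pair a u + pair a v.
Proof. by rewrite /pair mulmxDr !mxE. Qed.

Lemma pairZ (a : Vd) (c : R) (v : V) : pair a (c *: v) = c * pair a v.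
Proof. by rewrite /pair -scalemxAr mxE. Qed.

Lemma pairBl (a b : Vd) (v : V) : pair (a - b) v = pair a v - pair b v.
Proof. by rewrite /pair mulmxBl !mxE. Qed.

Lemma pairZl (a : Vd) (c : R) (v : V) : pair (c *: a) v = c * pair a v.
Proof. by rewrite /pair -scalemxAl mxE. Qed.

Lemma pair_inj (a b : Vd) : (forall v, pair a v = pair b v) -> a = b.
Proof.
by move=> eq_ab; apply/rowP => j; have := eq_ab (delta_mx j 0); rewrite /pair -!colE !mxE.
Qed.

Lemma pair_continuous (a : Vd) : continuous (pair a).
Proof.
have -> : pair a = fun v => \sum_j a 0 j * v j 0 by apply/funext => v; rewrite /pair mxE.
apply: continuous_big => [|j _ v]; first exact: add_continuous.
by apply: continuousM; [exact: cst_continuous | exact: coord_continuous].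
Qed.

Lemma refl_mulmx (cor : Vd -> V) (a : Vd) (v : V) :
  refl cor a *m v = v - pair a v *: cor a.
Proof. by rewrite /refl mulmxBl mul1mx -mulmxA [a *m v]mx11_scalar mul_mx_scalar. Qed.

Lemma mulmx_refl (cor : Vd -> V) (a b : Vd) :
  b *m refl cor a = b - pair b (cor a) *: a.
Proof. by rewrite /refl mulmxBr mulmx1 mulmxA [b *m cor a]mx11_scalar mul_scalar_mx. Qed.

Lemma refl_invol (cor : Vd -> V) (a : Vd) : pair a (cor a) = 2 ->
  refl cor a *m refl cor a = 1%:M.
Proof.
move=> a2; rewrite {1}/refl mulmxBl mul1mx -mulmxA mulmx_refl a2.
by rewrite scaler_nat mulr2n opprD addrA subrr add0r mulmxN /refl opprK subrK.
Qed.

Lemma invmx_refl (cor : Vd -> V) (a : Vd) : pair a (cor a) = 2 ->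
  invmx (refl cor a) = refl cor a.
Proof.
move=> /refl_invol SS; have [Su _] := mulmx1_unit SS.
by rewrite -[RHS]mul1mx -(mulVmx Su) -mulmxA SS mulmx1.
Qed.

Lemma act_amul (x y : aff R n) (v : V) : act (amul x y) v = act x (act y v).
Proof. by rewrite /act /amul /= mulmxDr mulmxA addrA. Qed.

Lemma img_amul (x y : aff R n) (b : set V) : img (amul x y) b = img x (img y b).
Proof. by rewrite /img image_comp; apply: eq_imagel => v _; rewrite act_amul. Qed.

Lemma delta_conj (sg : 'M[R]_n) (x : aff R n) :
  delta sg x = amul (amul (sg, 0) x) (invmx sg, 0).
Proof. by rewrite /delta /amul /= mulmx0 !addr0 add0r. Qed.

End LinearAlgebra.

Section Levels.
Variables (R : realType) (n : nat).
Local Notation V := 'cV[R]_n.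
Local Notation Vd := 'rV[R]_n.
Local Notation pair := (@pair R n).

Lemma int_interval_uniq (x : R) (m m' : int) :
  m%:~R - 1 < x < m%:~R -> m'%:~R - 1 < x < m'%:~R -> m = m'.
Proof.
move=> /andP[lo hi] /andP[lo' hi'].
have : (m - 1 < m')%R by rewrite -(ltr_int R) intrB; lra.
have : (m' - 1 < m)%R by rewrite -(ltr_int R) intrB; lra.
lia.
Qed.

Lemma between_uniq (g : Vd) (b : set V) (v : V) (m m' : int) :
  b v -> between g b m -> between g b m' -> m = m'.
Proof. by move=> bv /(_ v bv) gm /(_ v bv); apply: int_interval_uniq. Qed.

(* The paper's k(g, b); it is 0 when [b] lies in no strip of [g]. *)
Definition level (g : Vd) (b : set V) : int := xget 0 [set m | between g b m].

Lemma levelE (g : Vd) (b : set V) (v : V) (m : int) :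
  b v -> between g b m -> level g b = m.
Proof.
rewrite /level => bv gm; case: xgetP => [m' -> gm' | /(_ m) //].
exact: between_uniq bv gm' gm.
Qed.

Lemma between_img (g : Vd) (x : aff R n) (b : set V) (m z : int) :
  pair g x.2 = z%:~R -> between (g *m x.1) b m -> between g (img x b) (m + z).
Proof.
move=> gz gm _ [v bv <-]; have /andP[lo hi] := gm v bv.
by rewrite /act pairD pairM gz intrD; apply/andP; split; lra.
Qed.

Lemma closure_between (g : Vd) (b : set V) (m : int) (p : V) :
  between g b m -> closure b p -> m%:~R - 1 <= pair g p <= m%:~R.
Proof.
move=> gm bp.
set C := pair g @^-1` ([set x | m%:~R - 1 <= x] `&` [set x | x <= m%:~R]).
have closedC : closed C.
  apply: (continuous_closedP _).1; first exact: pair_continuous.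
  by apply: closedI; [exact: closed_ge | exact: closed_le].
have bC : b `<=` C by move=> v /gm /andP[lo hi]; split; apply: ltW.
have [lo hi] : C p by rewrite (closure_id C).1 //; exact: closureS bC p bp.
by apply/andP.
Qed.

Lemma closure_between_strict (g : Vd) (b : set V) (m : int) (p : V) :
  between g b m -> closure b p -> (forall j : int, pair g p <> j%:~R) ->
  m%:~R - 1 < pair g p < m%:~R.
Proof.
move=> gm bp gnint; have /andP[lo hi] := closure_between gm bp.
have ne1 := gnint (m - 1); rewrite intrB in ne1.
rewrite !lt_def lo hi !andbT; apply/andP; split; apply/eqP; first exact: ne1.
by move/esym; apply: gnint.
Qed.

(* The level of [g] is the ceiling of [g p] at any closure point [p] where
   [g p] is not an integer; this is how a wall point compares two levels. *)
Lemma between_shift_at_closure (b : set V) (p : V) (al g : Vd) (k z m m' : int) :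
  closure b p -> pair al p = k%:~R -> (forall j : int, pair g p <> j%:~R) ->
  between g b m -> between (g - z%:~R *: al) b m' -> m = m' + z * k.
Proof.
move=> bp alk gnint gm gm'.
have g'p : pair (g - z%:~R *: al) p = pair g p - (z * k)%:~R.
  by rewrite pairBl pairZl alk intrM.
have g'nint (j : int) : pair (g - z%:~R *: al) p <> j%:~R.
  by rewrite g'p => /eqP; rewrite subr_eq -intrD => /eqP; apply: gnint.
apply: (int_interval_uniq (closure_between_strict gm bp gnint)).
have /andP[lo hi] := closure_between_strict gm' bp g'nint.
by rewrite g'p intrD in lo hi *; apply/andP; split; lra.
Qed.

End Levels.

Section RootLevels.
Variables (R : realType) (n : nat) (Sigma : seq 'rV[R]_n).
Local Notation V := 'cV[R]_n.
Local Notation Vd := 'rV[R]_n.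
Local Notation pair := (@pair R n).

Definition has_levels (b : set V) : Prop :=
  (exists v, b v) /\ forall g, g \in Sigma -> between g b (level g b).

Definition root_integral (x : aff R n) : Prop :=
  forall g, g \in Sigma -> g *m x.1 \in Sigma /\ is_int (pair g x.2).

Lemma level_img (x : aff R n) (b : set V) (g : Vd) (z : int) :
  has_levels b -> g *m x.1 \in Sigma -> pair g x.2 = z%:~R ->
  level g (img x b) = level (g *m x.1) b + z.
Proof.
move=> [[v bv] levb] gxS gz.
by apply: (levelE (v := act x v)); [exists v | apply: between_img gz (levb _ gxS)].
Qed.

Lemma has_levels_img (x : aff R n) (b : set V) :
  root_integral x -> has_levels b -> has_levels (img x b).
Proof.
move=> xint bl; have [[v bv] levb] := bl; split; first by exists (act x v), v.
move=> g gS; have [gxS [z gz]] := xint g gS.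
by rewrite (level_img bl gxS gz); apply: between_img gz (levb _ gxS).
Qed.

Lemma geq_at_level (g : Vd) (b1 b2 : set V) :
  has_levels b1 -> has_levels b2 -> g \in Sigma ->
  geq_at g b1 b2 <-> (level g b2 <= level g b1)%R.
Proof.
move=> [[v1 bv1] lev1] [[v2 bv2] lev2] gS; split => [[m1 [m2 [gm1 gm2 le]]]|le].
  by rewrite (levelE bv1 gm1) (levelE bv2 gm2).
by exists (level g b1), (level g b2); split; [apply: lev1 | apply: lev2 |].
Qed.

Lemma root_integral_amul (x y : aff R n) :
  root_integral x -> root_integral y -> root_integral (amul x y).
Proof.
move=> xint yint g gS; have [gxS [zx gzx]] := xint g gS.
have [gxyS [zy gzy]] := yint _ gxS; split; first by rewrite /= mulmxA.
by exists (zy + zx); rewrite /= pairD pairM gzy gzx intrD.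
Qed.

Lemma root_integral_linear (M : 'M[R]_n) :
  (forall g, g \in Sigma -> g *m M \in Sigma) -> root_integral (M, 0).
Proof. by move=> MS g gS; split; [exact: MS | exists 0; rewrite /pair mulmx0 mxE]. Qed.

(* [pair g] maps the connected alcove onto an interval containing no integer. *)
Lemma alcove_has_levels (b : set V) : is_alcove Sigma b -> has_levels b.
Proof.
move=> [v0 [reg0 ->]]; set C := connected_component _ v0.
have Cv0 : C v0 by exact: connected_component_refl.
split => [|g gS]; first by exists v0.
have avoid (j : int) w : C w -> pair g w <> j%:~R.
  by move=> /connected_component_sub /(_ g j gS).
have /connected_intervalP itv : connected (pair g @` C).
  apply: connected_continuous_connected; first exact: component_connected.
  by apply: continuous_subspaceT; exact: pair_continuous.
set fl := Num.floor (pair g v0); have /andP[f1 f2] := floor_itv (pair g v0).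
suff gC : between g C (fl + 1) by rewrite (levelE Cv0 gC).
move=> w Cw; rewrite intrD addrK; apply/andP; split; rewrite ltNge; apply/negP => le.
  have [w' Cw'] : (pair g @` C) fl%:~R.
    by apply: (itv (pair g w) (pair g v0)); [exists w | exists v0 | rewrite le f1].
  exact: avoid.
have [w' Cw'] : (pair g @` C) (fl + 1)%:~R.
  apply: (itv (pair g v0) (pair g w)); [by exists v0 | by exists w |].
  by rewrite -intrD in le; rewrite le ltW.
exact: avoid.
Qed.

End RootLevels.

Section RootSystem.
Variables (R : realType) (n : nat) (Sigma : seq 'rV[R]_n) (cor : 'rV[R]_n -> 'cV[R]_n).
Local Notation V := 'cV[R]_n.
Local Notation Vd := 'rV[R]_n.
Local Notation pair := (@pair R n).
Hypothesis RS : reduced_root_system Sigma cor.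

Let cor2 a : a \in Sigma -> pair a (cor a) = 2.
Proof. by case: RS => _ _ c2 _; apply: c2. Qed.

Let refl_root a g : a \in Sigma -> g \in Sigma -> g *m refl cor a \in Sigma.
Proof. by case: RS => _ _ _ [reflS _ _] aS gS; rewrite mulmx_refl reflS. Qed.

Let coroot_int a g : a \in Sigma -> g \in Sigma -> is_int (pair g (cor a)).
Proof. by case: RS => _ _ _ [_ intS _]; apply: intS. Qed.

Lemma inW_unit w : inW Sigma cor w -> w \in unitmx.
Proof.
elim=> [|a {}w aS _ wu]; first exact: unitmx1.
by rewrite unitmx_mul wu andbT; have [] := mulmx1_unit (refl_invol (cor2 aS)).
Qed.

Lemma inW_root w g : inW Sigma cor w -> g \in Sigma -> g *m w \in Sigma.
Proof.
move=> wW; elim: wW g => [|a {}w aS _ IH] g gS; first by rewrite mulmx1.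
by rewrite mulmxA; apply/IH/refl_root.
Qed.

Lemma root_integral_IW (Lam : set V) (x : aff R n) :
  (forall a u, a \in Sigma -> Lam u -> is_int (pair a u)) ->
  in_IW Sigma cor Lam x -> root_integral Sigma x.
Proof. by move=> LamZ [xW xLam] g gS; split; [exact: inW_root | exact: LamZ]. Qed.

Lemma root_integral_sref a (k : int) : a \in Sigma -> root_integral Sigma (sref cor a k).
Proof.
move=> aS g gS; split; first exact: refl_root.
by have [z gz] := coroot_int aS gS; exists (k * z); rewrite /= pairZ gz intrM.
Qed.

Lemma hyp_eq_roots (g a : Vd) (m k : int) : g \in Sigma -> a \in Sigma ->
  Hyp g m = Hyp a k -> g = a \/ g = - a.
Proof.
move=> gS aS gmak; case: RS => _ _ _ [_ _ reduced].
have a2 := cor2 aS; have twoN0 : (2 : R) != 0 by rewrite pnatr_eq0.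
have onHyp v : pair a v = k%:~R -> pair g v = m%:~R.
  by move=> akv; rewrite -[_ = _]/(Hyp g m v) gmak.
pose p0 : V := (k%:~R / 2) *: cor a.
have gp0 : pair g p0 = m%:~R by apply: onHyp; rewrite pairZ a2 mulfVK.
suff gE : g = (pair g (cor a) / 2) *: a.
  by case: (reduced a g _ aS gS gE) => c1; rewrite gE c1 ?scale1r ?scaleN1r;
    [left | right].
apply: pair_inj => v; rewrite pairZl.
have := onHyp (p0 + (v + (- (pair a v / 2)) *: cor a)).
rewrite !pairD gp0 !pairZ a2 => /(_ ltac:(lra)); lra.
Qed.

Lemma act_sref a (k : int) (v : V) :
  act (sref cor a k) v = v - (pair a v - k%:~R) *: cor a.
Proof. by rewrite /act /= refl_mulmx scalerBl opprB addrA addrAC. Qed.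

Lemma simple_refl_wall_point (base : set V) a (k : int) : a \in Sigma ->
  simple_refl Sigma cor base (sref cor a k) ->
  exists p, [/\ closure base p, pair a p = k%:~R &
    forall g, g \in Sigma -> g != a -> g != - a -> forall j : int, pair g p <> j%:~R].
Proof.
move=> aS [a0 [k0 [a0S [[p [bp [a0p onlyH]]] sE]]]]; exists p.
have apk : pair a p = k%:~R.
  have : act (sref cor a k) p = p by rewrite sE act_sref a0p subrr scale0r subr0.
  rewrite act_sref => /eqP; rewrite subr_eq addrC -subr_eq subrr eq_sym scaler_eq0.
  case/orP => [|/eqP c0]; first by rewrite subr_eq0 => /eqP.
  by have := cor2 aS; rewrite c0 /pair mulmx0 mxE => /eqP; rewrite eq_sym pnatr_eq0.
split=> // g gS ga gNa j gpj.
have : Hyp g j = Hyp a k by rewrite (onlyH g j gS gpj) (onlyH a k aS apk).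
by case/(hyp_eq_roots gS aS) => /eqP; apply/negP.
Qed.

Lemma level_refl_img (X : set V) a (k : int) (h : Vd) (zh : int) :
  a \in Sigma -> has_levels Sigma X -> h \in Sigma -> pair h (cor a) = zh%:~R ->
  level (h *m refl cor a) (img (sref cor a k) X) = level h X - zh * k.
Proof.
move=> aS Xl hS hz.
have hSS : h *m refl cor a *m refl cor a = h by rewrite -mulmxA refl_invol ?cor2 // mulmx1.
have hSz : pair (h *m refl cor a) (sref cor a k).2 = (- (zh * k))%:~R.
  by rewrite /= pairZ mulmx_refl pairBl pairZl cor2 // hz intrN intrM; ring.
by rewrite (level_img Xl _ hSz) /= hSS.
Qed.

Section Wall.
Variables (base : set V) (a : Vd) (k : int) (p : V).
Hypotheses (aS : a \in Sigma) (base_levels : has_levels Sigma base).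
Hypotheses (base_p : closure base p) (apk : pair a p = k%:~R).
Hypothesis p_generic :
  forall g, g \in Sigma -> g != a -> g != - a -> forall j : int, pair g p <> j%:~R.

Lemma level_refl_base (h : Vd) (zh : int) : h \in Sigma -> h != a -> h != - a ->
  pair h (cor a) = zh%:~R -> level (h *m refl cor a) base = level h base - zh * k.
Proof.
move=> hS ha hNa hz; have [_ lev] := base_levels.
have hSS : h *m refl cor a \in Sigma by exact: refl_root.
have := lev _ hSS; rewrite mulmx_refl hz => hSl.
by rewrite (between_shift_at_closure base_p apk (p_generic hS ha hNa) (lev _ hS) hSl) addrK.
Qed.

Lemma level_refl_wall (h : Vd) : h \in Sigma -> h != a -> h != - a ->
  level h (img (sref cor a k) base) = level h base.
Proof.
move=> hS ha hNa; have [zh hz] := coroot_int aS hS.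
rewrite (level_img (z := k * zh) base_levels) ?refl_root //; last first.
  by rewrite /= pairZ hz intrM.
by rewrite (level_refl_base hS ha hNa hz) mulrC subrK.
Qed.

End Wall.

End RootSystem.

(* An injective self-map of a finite set is onto. *)
Lemma roots_mulmx_of_invmx (R : realType) (n : nat) (Sigma : seq 'rV[R]_n) (M : 'M[R]_n) :
  M \in unitmx -> (forall a, a \in Sigma -> a *m invmx M \in Sigma) ->
  forall a, a \in Sigma -> a *m M \in Sigma.
Proof.
move=> Mu MVS a aS; pose f (c : 'rV[R]_n) := c *m invmx M.
have f_inj : injective f by apply: (can_inj (g := mulmx^~ M)) => c; rewrite /f mulmxKV.
have f_uniq : uniq (map f (undup Sigma)) by rewrite map_inj_uniq // undup_uniq.
have f_sub : {subset map f (undup Sigma) <= undup Sigma}.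
  by move=> c /mapP[d dS ->]; rewrite mem_undup MVS // -mem_undup.
have [_ fE] := uniq_min_size f_uniq f_sub (eq_leq (esym (size_map f _))).
have : a \in map f (undup Sigma) by rewrite fE mem_undup.
by case/mapP => d dS ->; rewrite /f mulmxKV // -mem_undup.
Qed.

Lemma mulmx_eq_actR (R : realType) (n : nat) (w1 w2 : 'M[R]_n) (b c : 'rV[R]_n) :
  w1 \in unitmx -> w2 \in unitmx ->
  (b *m w1 *m w2 == c) = (b == actR w1 (actR w2 c)).
Proof. by move=> w1u w2u; apply/eqP/eqP => [<-|->]; rewrite /actR ?mulmxK ?mulmxKV. Qed.

Section Frobenius.
Variables (R : realType) (n : nat) (Sigma : seq 'rV[R]_n) (cor : 'rV[R]_n -> 'cV[R]_n).
Variables (sigma : 'M[R]_n) (base : set 'cV[R]_n) (a : 'rV[R]_n) (k : int) (p : 'cV[R]_n).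
Local Notation pair := (@pair R n).
Hypotheses (RS : reduced_root_system Sigma cor) (aS : a \in Sigma).
Hypotheses (sigma_unit : sigma \in unitmx)
  (sigma_root : forall g, g \in Sigma -> g *m sigma \in Sigma)
  (sigmaV_root : forall g, g \in Sigma -> g *m invmx sigma \in Sigma).
Hypotheses (base_levels : has_levels Sigma base)
  (sigma_base : img (sigma, 0) base = base).
Hypotheses (base_p : closure base p) (apk : pair a p = k%:~R).
Hypothesis p_generic :
  forall g, g \in Sigma -> g != a -> g != - a -> forall j : int, pair g p <> j%:~R.

Let s := sref cor a k.

Lemma root_integral_delta_refl : root_integral Sigma (delta sigma s).
Proof.
rewrite delta_conj; apply: root_integral_amul; last exact: root_integral_linear.
by apply: root_integral_amul; [exact: root_integral_linear | exact: root_integral_sref].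
Qed.

Lemma img_invmx_base : img (invmx sigma, 0) base = base.
Proof.
rewrite -{1}sigma_base -img_amul /amul /= mulVmx // mulmx0 addr0 /img.
by under eq_imagel => v _ do rewrite /act /= mul1mx addr0; rewrite image_id.
Qed.

Lemma level_delta_refl (g : 'rV[R]_n) : g \in Sigma ->
  g *m sigma != a -> g *m sigma != - a ->
  level g (img (delta sigma s) base) = level g base.
Proof.
move=> gS ga gNa; have pair0 : pair g 0 = 0%:~R by rewrite /pair mulmx0 mxE.
have sl := has_levels_img (root_integral_sref RS k aS) base_levels.
rewrite delta_conj !img_amul img_invmx_base.
rewrite (level_img (x := (sigma, 0)) sl (sigma_root gS) pair0).
rewrite (level_refl_wall RS aS base_levels base_p apk p_generic) ?sigma_root //.
by rewrite -{2}sigma_base (level_img (x := (sigma, 0)) base_levels (sigma_root gS) pair0).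
Qed.

Lemma level_amul_delta_refl (x : aff R n) (beta : 'rV[R]_n) :
  root_integral Sigma x -> beta \in Sigma ->
  beta *m x.1 *m sigma != a -> beta *m x.1 *m sigma != - a ->
  level beta (img (amul x (delta sigma s)) base) = level beta (img x base).
Proof.
move=> xint bS ba bNa; have [bxS [z bz]] := xint _ bS.
have dl := has_levels_img root_integral_delta_refl base_levels.
by rewrite img_amul (level_img dl bxS bz) (level_img base_levels bxS bz) level_delta_refl.
Qed.

End Frobenius.

Theorem lemma4p4p2 (R : realType) (n : nat) (Sigma : seq 'rV[R]_n)
  (cor : 'rV[R]_n -> 'cV[R]_n) (Lam : set 'cV[R]_n) (sigma : 'M[R]_n)
  (base : set 'cV[R]_n) :
  IW_setting Sigma cor Lam sigma base ->
  forall (y s : aff R n) (alpha : 'rV[R]_n) (k : int),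
  in_IW Sigma cor Lam y ->
  simple_refl Sigma cor base s ->
  alpha \in Sigma -> s = sref cor alpha k ->
  let yda := actR (bar y) (actR sigma alpha) in
  (forall beta, beta \in Sigma ->
     beta \notin [:: alpha; - alpha; yda; - yda] ->
     (geq_at (actR (bar s) beta)
        (img (amul (amul s y) (delta sigma s)) base) base
      <-> geq_at beta (img y base) base)) /\
  (forall beta, beta \in Sigma ->
     beta \notin [:: yda; - yda] ->
     (geq_at beta (img y base) base
      <-> geq_at beta (img (amul y (delta sigma s)) base) base)).
Proof.
move=> [RS [_ _ _ LamZ _] [su _ _ _ sigmaVS] alcove sigma_base] y s alpha k yIW + aS sE.
rewrite {s}sE => simple yda.
have base_levels := alcove_has_levels alcove.
have sigmaS := roots_mulmx_of_invmx su sigmaVS.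
have [p [base_p apk p_generic]] := simple_refl_wall_point RS aS simple.
have yint := root_integral_IW RS LamZ yIW.
have yu := inW_unit RS yIW.1.
set d := delta sigma (sref cor alpha k).
have dint : root_integral Sigma d by exact: root_integral_delta_refl.
have yl := has_levels_img yint base_levels.
have dl := has_levels_img dint base_levels.
have ydl := has_levels_img yint dl.
have part2 beta : beta \in Sigma -> beta \notin [:: yda; - yda] ->
    level beta (img y (img d base)) = level beta (img y base).
  rewrite !inE => bS /norP[nyd nNyd]; rewrite -img_amul.
  apply: (level_amul_delta_refl RS aS su sigmaS sigmaVS base_levels sigma_base
            base_p apk p_generic yint bS).
    by rewrite mulmx_eq_actR.
  by rewrite mulmx_eq_actR // /actR !mulNmx.
split=> beta bS nb; rewrite ?img_amul.
  move: nb; rewrite !inE => /norP[ba /norP[bNa nyd]].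
  have [_ _ cor2 [_ corZ _]] := RS.
  have [zb bz] := corZ _ _ aS bS.
  have [bSS _] := root_integral_sref RS k aS bS.
  have sydl := has_levels_img (root_integral_sref RS k aS) ydl.
  rewrite /actR /bar /= invmx_refl ?cor2 //.
  rewrite (geq_at_level sydl base_levels bSS) (geq_at_level yl base_levels bS).
  rewrite (level_refl_img RS k aS ydl bS bz).
  rewrite (level_refl_base RS aS base_levels base_p apk p_generic bS ba bNa bz).
  by rewrite part2 ?inE // lerD2r.
by rewrite (geq_at_level yl base_levels bS) (geq_at_level ydl base_levels bS) part2.
Qed.
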